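(* Let $\pi$ be a policy, $h:\mathcal S\to\mathbb R$ bounded, $\lambda\in[0,1]$, and $\epsilon_l,\epsilon_u\ge0$ such that $-\epsilon_l\le h(s)-V^\pi(s)\le\epsilon_u$ for all $s\in\mathcal S$. Then for all $s\in\mathcal S$, $$-\epsilon_l-\frac{(1-\lambda)\gamma\,\epsilon_u}{1-\lambda\gamma}\le h(s)-\widetilde V^\pi(s)\le\epsilon_u+\frac{(1-\lambda)\gamma\,\epsilon_l}{1-\lambda\gamma}.$$
   Context: Let $\mathcal M=(\mathcal S,\mathcal A,P,r,\gamma)$ be a discounted MDP with transition kernel $P(\cdot|s,a)$, reward $r:\mathcal S\times\mathcal A\to[0,1]$ and discount $\gamma\in[0,1)$. A policy $\pi$ is a Markov kernel from $\mathcal S$ to distributions on $\mathcal A$; $\rho^\pi(s)$ is the trajectory law with $s_0=s$, $a_t\sim\pi(\cdot|s_t)$, $s_{t+1}\sim P(\cdot|s_t,a_t)$. $V^\pi(s)=\mathbb E_{\rho^\pi(s)}[\sum_t\gamma^tr(s_t,a_t)]$. Reshaped MDP: $\widetilde{\mathcal M}=(\mathcal S,\mathcal A,P,\widetilde r,\lambda\gamma)$ with $\widetilde r(s,a)=r(s,a)+(1-\lambda)\gamma\,\mathbb E_{s'\sim P(\cdot|s,a)}[h(s')]$, and $\widetilde V^\pi(s)=\mathbb E_{\rho^\pi(s)}[\sum_t(\lambda\gamma)^t\widetilde r(s_t,a_t)]$. *)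

From HB Require Import structures.
From mathcomp Require Import all_boot all_order all_algebra.
From mathcomp Require Import all_classical all_reals all_analysis.
Set Implicit Arguments. Unset Strict Implicit. Unset Printing Implicit Defensive.
Import Order.TTheory GRing.Theory Num.Theory numFieldNormedType.Exports.
Local Open Scope classical_set_scope.
Local Open Scope ring_scope.

Section MDP.
Context (dS dA : measure_display) (S : measurableType dS) (A : measurableType dA)
  (R : realType).

Definition pol_step (pi : R.-pker S ~> A) (P : R.-pker (S * A) ~> S)
  (f : S -> R) : S -> R :=
  fun s => Rintegral (pi s) setT (fun a => Rintegral (P (s, a)) setT f).

Definition pol_reward (pi : R.-pker S ~> A) (rr : S * A -> R) : S -> R :=
  fun s => Rintegral (pi s) setT (fun a => rr (s, a)).

(* E_{rho^pi(s)} [rr (s_t, a_t)] = (P_pi^t r_pi)(s) : the time-t marginal of the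
   trajectory law rho^pi(s) (Ionescu-Tulcea), written via iterated kernels. *)
Definition step_expect (pi : R.-pker S ~> A) (P : R.-pker (S * A) ~> S)
  (rr : S * A -> R) (t : nat) : S -> R :=
  iter t (pol_step pi P) (pol_reward pi rr).

(* discounted value E_{rho^pi(s)} [ sum_t g^t rr(s_t,a_t) ] = sum_t g^t E[rr(s_t,a_t)] *)
Definition value (pi : R.-pker S ~> A) (P : R.-pker (S * A) ~> S)
  (rr : S * A -> R) (g : R) (s : S) : R :=
  limn (series (fun t => g ^+ t * step_expect pi P rr t s)).

Definition reshaped_reward (P : R.-pker (S * A) ~> S) (r : S * A -> R)
  (h : S -> R) (lam g : R) : S * A -> R :=
  fun sa => r sa + (1 - lam) * g * Rintegral (P sa) setT h.

End MDP.

From HB Require Import structures.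
From mathcomp Require Import all_boot all_order all_algebra.
From mathcomp Require Import all_classical all_reals all_analysis.
From mathcomp Require Import measurable_realfun lra ring.
Import Order.TTheory GRing.Theory Num.Theory numFieldNormedType.Exports.
Local Open Scope classical_set_scope.
Local Open Scope ring_scope.

(* Let T be the one-step operator f |-> E_{a ~ pi(.|s), s' ~ P(.|s,a)} f(s'),
   q = lam gamma, c = (1 - lam) gamma and e = h - V^pi.  On bounded measurable
   functions T is linear, monotone and fixes constants, so for 0 <= q < 1 the
   discounted sum D_q f = sum_t q^t T^t f is the unique bounded measurable
   solution of W = f + q T W.  The Bellman equation V^pi = r_pi + gamma T V^pi
   and q + c = gamma give r~_pi = r_pi + c T h = V^pi - q T V^pi + c T e, so
   V^pi + c D_q (T e) solves the reshaped equation and equals V~^pi.  Hence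
   h - V~^pi = e - c D_q (T e), and T e takes values in [-eps_l, eps_u], so
   D_q (T e) takes values in [-eps_l, eps_u] / (1 - q). *)

Set Implicit Arguments.
Unset Strict Implicit.
Unset Printing Implicit Defensive.

Lemma ler_norm_itv (R : realDomainType) (a b x : R) :
  a <= x <= b -> `|x| <= `|a| + `|b|.
Proof.
move=> /andP[ax xb]; have := ler_norm b; have := ler_norm (- a).
have := normr_ge0 a; have := normr_ge0 b.
by rewrite normrN ler_norml => *; apply/andP; split; lra.
Qed.

Section discounted_series.
Context (R : realType) (q : R).
Hypotheses (q_ge0 : 0 <= q) (q_lt1 : q < 1).

Let inv_ge0 : 0 <= (1 - q)^-1. Proof. by rewrite invr_ge0 subr_ge0 ltW. Qed.

Lemma geometric_tail_le N n : \sum_(N <= t < n) q ^+ t <= q ^+ N / (1 - q).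
Proof.
have [nN|Nn] := leqP n N; first by rewrite big_geq // mulr_ge0 ?exprn_ge0.
rewrite -(subnKC (ltnW Nn)) geometric_partial_tail geometric_seriesE ?lt_eqF //=.
by rewrite ler_wpM2r // ler_piMr ?exprn_ge0 // gerBl exprn_ge0.
Qed.

Section bounded_terms.
Variables (x : R ^nat) (B : R).
Hypothesis x_bound : forall t, `|x t| <= B.

Let B_ge0 : 0 <= B. Proof. exact: le_trans (x_bound 0). Qed.

Lemma is_cvg_discounted_series : cvgn (series (fun t => q ^+ t * x t)).
Proof.
apply: normed_cvg; apply: (@series_le_cvg _ _ (geometric B q)).
- by move=> t; rewrite normr_ge0.
- by move=> t; rewrite /geometric /= mulr_ge0 ?exprn_ge0.
- move=> t; rewrite /geometric /= normrM ger0_norm ?exprn_ge0 // mulrC.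
  by rewrite ler_wpM2r ?exprn_ge0.
- by apply: is_cvg_geometric_series; rewrite ger0_norm.
Qed.

Lemma discounted_series_tail N :
  `|limn (series (fun t => q ^+ t * x t)) - series (fun t => q ^+ t * x t) N|
    <= q ^+ N * B / (1 - q).
Proof.
set u := series _.
have cvg_tail : (fun n => u n - u N) @ \oo --> limn u - u N.
  by apply: cvgB; [exact: is_cvg_discounted_series | exact: cvg_cst].
have is_cvg_tail : cvgn (fun n => u n - u N) by apply/cvg_ex; eexists; exact: cvg_tail.
rewrite -(cvg_lim _ cvg_tail) // -lim_norm //.
apply: limr_le; first exact: is_cvg_norm.
exists N => // n /= Nn; rewrite sub_series_geq // (le_trans (ler_norm_sum _ _ _)) //.
apply: (@le_trans _ _ (\sum_(N <= t < n) q ^+ t * B)).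
  apply: ler_sum => t _; rewrite normrM ger0_norm ?exprn_ge0 //.
  by rewrite ler_wpM2l ?exprn_ge0.
by rewrite -mulr_suml mulrAC ler_wpM2r // geometric_tail_le.
Qed.

End bounded_terms.

Lemma discounted_series_bounds (x : R ^nat) a b : (forall t, a <= x t <= b) ->
  a / (1 - q) <= limn (series (fun t => q ^+ t * x t)) <= b / (1 - q).
Proof.
move=> x_ab; have x_bound t : `|x t| <= `|a| + `|b| by exact: ler_norm_itv.
have cvg_x := is_cvg_discounted_series x_bound.
have q_norm : `|q| < 1 by rewrite ger0_norm.
have geo c : limn (series (geometric c q)) = c / (1 - q).
  exact/cvg_lim/cvg_geometric_series.
have cvg_geo c : cvgn (series (geometric c q)) by exact: is_cvg_geometric_series.
apply/andP; split; rewrite -geo; apply: lim_series_le => // t; rewrite /geometric /=.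
  by rewrite mulrC ler_wpM2l ?exprn_ge0 //; case/andP: (x_ab t).
by rewrite [b * _]mulrC ler_wpM2l ?exprn_ge0 //; case/andP: (x_ab t).
Qed.

Lemma eq0_le_geometric (y K : R) : (forall n, `|y| <= q ^+ n * K) -> y = 0.
Proof.
move=> y_le; apply/normr0_eq0/le_anti; rewrite normr_ge0 andbT.
have cvg_K : (fun n => q ^+ n * K) @ \oo --> 0 * K.
  by apply: cvgMl; apply: cvg_expr; rewrite ger0_norm.
rewrite mul0r in cvg_K; rewrite -(cvg_lim _ cvg_K) //.
by apply: limr_ge; [apply/cvg_ex; exists 0 | exists 0%N].
Qed.

End discounted_series.

Section bounded_measurable.
Context d (T : measurableType d) (R : realType).
Implicit Types f g : T -> R.

Definition bounded_measurable f :=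
  measurable_fun setT f /\ exists M, forall x, `|f x| <= M.

Lemma bounded_measurable_cst c : bounded_measurable (cst c).
Proof. by split => //; exists `|c|. Qed.

Lemma bounded_measurableD f g :
  bounded_measurable f -> bounded_measurable g -> bounded_measurable (f \+ g).
Proof.
move=> [mf [M f_M]] [mg [N g_N]]; split; first exact: measurable_funD.
by exists (M + N) => x; rewrite (le_trans (ler_normD _ _)) // lerD.
Qed.

Lemma bounded_measurableZ c f :
  bounded_measurable f -> bounded_measurable (c \*o f).
Proof.
move=> [mf [M f_M]]; split; first exact: measurable_funM.
by exists (`|c| * M) => x; rewrite normrM ler_wpM2l.
Qed.

Lemma bounded_measurableB f g :
  bounded_measurable f -> bounded_measurable g -> bounded_measurable (f \- g).
Proof.
move=> bf bg; have := bounded_measurableD bf (bounded_measurableZ (-1) bg).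
by congr bounded_measurable; apply/funext => x /=; rewrite mulN1r.
Qed.

Lemma bounded_measurable_itv f a b :
  measurable_fun setT f -> (forall x, a <= f x <= b) -> bounded_measurable f.
Proof.
by move=> mf f_ab; split => //; exists (`|a| + `|b|) => x; exact: ler_norm_itv.
Qed.

Lemma bounded_measurable_itvP f :
  bounded_measurable f -> exists M, forall x, - M <= f x <= M.
Proof. by move=> [_ [M f_M]]; exists M => x; rewrite -ler_norml. Qed.

End bounded_measurable.

Section probability_integral.
Context d (T : measurableType d) (R : realType) (mu : {measure set T -> \bar R}).
Hypothesis mu_setT : mu setT = 1%E.
Implicit Types f g : T -> R.

Lemma bounded_measurable_integrable f :
  bounded_measurable f -> mu.-integrable setT (EFin \o f).
Proof.
move=> [mf [M f_M]]; apply/integrableP; split; first exact/measurable_EFinP.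
apply: (@le_lt_trans _ _ ((`|M|)%:E * mu setT)%E); last by rewrite mu_setT mule1 ltry.
apply: integral_le_bound => //; first exact/measurable_EFinP.
by apply: aeW => x _ /=; rewrite lee_fin (le_trans (f_M x)) // ler_norm.
Qed.

Lemma Rintegral_cst1 c : Rintegral mu setT (cst c) = c.
Proof. by rewrite Rintegral_cst // mu_setT /= mulr1. Qed.

Lemma Rintegral_itv f a b : bounded_measurable f -> (forall x, a <= f x <= b) ->
  a <= Rintegral mu setT f <= b.
Proof.
move=> bf f_ab; have f_int := bounded_measurable_integrable bf.
have cst_int c := bounded_measurable_integrable (bounded_measurable_cst T c).
apply/andP; split.
  rewrite -[X in X <= _](Rintegral_cst1 a).
  apply: le_Rintegral => //; first exact: cst_int.
  by move=> x _; case/andP: (f_ab x).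
rewrite -(Rintegral_cst1 b); apply: le_Rintegral => //; first exact: cst_int.
by move=> x _; case/andP: (f_ab x).
Qed.

End probability_integral.

Section kernel_integral.
Context d d' (X : measurableType d) (Y : measurableType d') (R : realType)
  (k : R.-pker X ~> Y).
Implicit Types g : X * Y -> R.

Definition kernel_integral g (x : X) : R :=
  Rintegral (k x) setT (fun y => g (x, y)).

Let bounded_measurable_section g x :
  bounded_measurable g -> bounded_measurable (fun y => g (x, y)).
Proof. by move=> [mg [M g_M]]; split; [exact: measurable_fun_pair2 | exists M]. Qed.

Let integrable_section g x :
  bounded_measurable g -> (k x).-integrable setT (EFin \o (fun y => g (x, y))).
Proof.
move=> bg; apply: bounded_measurable_integrable; first exact: prob_kernel.
exact: bounded_measurable_section.
Qed.

Lemma kernel_integral_itv g a b : bounded_measurable g ->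
  (forall z, a <= g z <= b) -> forall x, a <= kernel_integral g x <= b.
Proof.
move=> bg g_ab x; apply: Rintegral_itv; first exact: prob_kernel.
  exact: bounded_measurable_section.
by move=> y; exact: g_ab.
Qed.

Lemma kernel_integralD g1 g2 : bounded_measurable g1 -> bounded_measurable g2 ->
  kernel_integral (g1 \+ g2) = kernel_integral g1 \+ kernel_integral g2.
Proof.
move=> b1 b2; apply/funext => x.
by rewrite /kernel_integral /= RintegralD ?integrable_section.
Qed.

Lemma kernel_integralZ c g : bounded_measurable g ->
  kernel_integral (c \*o g) = c \*o kernel_integral g.
Proof.
move=> bg; apply/funext => x.
by rewrite /kernel_integral /= RintegralZl ?integrable_section.
Qed.

Lemma measurable_kernel_integral g :
  bounded_measurable g -> measurable_fun setT (kernel_integral g).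
Proof.
move=> bg; have [M g_M] := bounded_measurable_itvP bg.
have bgM : bounded_measurable (g \+ cst M).
  by apply: bounded_measurableD => //; exact: bounded_measurable_cst.
have -> : kernel_integral g = kernel_integral (g \+ cst M) \- cst M.
  apply/funext => x; rewrite kernel_integralD //; last exact: bounded_measurable_cst.
  have kM : kernel_integral (cst M) x = M by apply: Rintegral_cst1; exact: prob_kernel.
  by rewrite /= kM addrK.
apply: measurable_funB => //; apply: measurableT_comp; first exact: fine_measurable.
apply: (measurable_fun_integral_finite_kernel (EFin \o (g \+ cst M)) k).
  by move=> z /=; rewrite lee_fin; have /andP[gM _] := g_M z; lra.
by apply/measurable_EFinP; case: bgM.
Qed.

Lemma bounded_measurable_kernel_integral g :
  bounded_measurable g -> bounded_measurable (kernel_integral g).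
Proof.
move=> bg; have [M g_M] := bounded_measurable_itvP bg.
apply: (bounded_measurable_itv (a := - M) (b := M)).
  exact: measurable_kernel_integral.
exact: kernel_integral_itv.
Qed.

End kernel_integral.

Section markov_operator.
Context d (S : measurableType d) (R : realType).
Implicit Types f g : S -> R.

Record markov_operator (T : (S -> R) -> S -> R) : Prop := MarkovOperator {
  markov_bounded_measurable : forall f,
    bounded_measurable f -> bounded_measurable (T f);
  markovD : forall f g, bounded_measurable f -> bounded_measurable g ->
    T (f \+ g) = T f \+ T g;
  markovZ : forall c f, bounded_measurable f -> T (c \*o f) = c \*o T f;
  markov_itv : forall f a b, bounded_measurable f ->
    (forall s, a <= f s <= b) -> forall s, a <= T f s <= b }.

Variable T : (S -> R) -> S -> R.
Hypothesis T_markov : markov_operator T.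

Let bounded_measurable_T := markov_bounded_measurable T_markov.
Let TD := markovD T_markov.
Let TZ := markovZ T_markov.
Let T_itv := markov_itv T_markov.

Definition discounted_partial (q : R) f N s :=
  series (fun t => q ^+ t * iter t T f s) N.

Definition discounted (q : R) f s :=
  limn (series (fun t => q ^+ t * iter t T f s)).

Lemma markovB f g : bounded_measurable f -> bounded_measurable g ->
  T (f \- g) = T f \- T g.
Proof.
move=> bf bg.
have -> : f \- g = f \+ (-1) \*o g by apply/funext => s /=; rewrite mulN1r.
rewrite TD ?TZ //; last exact: bounded_measurableZ.
by apply/funext => s /=; rewrite mulN1r.
Qed.

Lemma markov_cst c : T (cst c) = cst c.
Proof.
apply/funext => s; have /andP[c_le le_c] : c <= T (cst c) s <= c.
  by apply: T_itv => [|s']; [exact: bounded_measurable_cst | rewrite lexx].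
by apply/le_anti; rewrite c_le le_c.
Qed.

Lemma markov_lipschitz f g e : bounded_measurable f -> bounded_measurable g ->
  (forall s, `|f s - g s| <= e) -> forall s, `|T f s - T g s| <= e.
Proof.
move=> bf bg fg s; rewrite ler_norml.
have := T_itv (a := - e) (b := e) (bounded_measurableB bf bg).
by rewrite markovB //; apply => s' /=; rewrite -ler_norml.
Qed.

Lemma bounded_measurable_iter t f :
  bounded_measurable f -> bounded_measurable (iter t T f).
Proof. by move=> bf; elim: t => [|t IH] //=; exact: bounded_measurable_T. Qed.

Lemma iter_itv t f a b : bounded_measurable f ->
  (forall s, a <= f s <= b) -> forall s, a <= iter t T f s <= b.
Proof.
move=> bf f_ab; elim: t => [|t IH] //=.
by apply: T_itv => //; exact: bounded_measurable_iter.
Qed.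

Lemma discounted_partial0 q f : discounted_partial q f 0 = cst 0.
Proof. by apply/funext => s; rewrite /discounted_partial /series /= big_geq. Qed.

Lemma discounted_partialSr q f N :
  discounted_partial q f N.+1 = discounted_partial q f N \+ q ^+ N \*o iter N T f.
Proof. by apply/funext => s; rewrite /discounted_partial /= seriesSr. Qed.

Lemma bounded_measurable_discounted_partial q f N :
  bounded_measurable f -> bounded_measurable (discounted_partial q f N).
Proof.
move=> bf; elim: N => [|N IH].
  by rewrite discounted_partial0; exact: bounded_measurable_cst.
rewrite discounted_partialSr; apply: bounded_measurableD => //.
exact/bounded_measurableZ/bounded_measurable_iter.
Qed.

Lemma discounted_partialS q f N : bounded_measurable f ->
  discounted_partial q f N.+1 = f \+ q \*o T (discounted_partial q f N).
Proof.
move=> bf; elim: N => [|N IH].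
  rewrite discounted_partialSr discounted_partial0 markov_cst.
  by apply/funext => s /=; rewrite expr0 !mul1r mulr0 add0r addr0.
rewrite [LHS]discounted_partialSr {1}IH discounted_partialSr TD ?TZ; last 3 first.
- exact: bounded_measurable_iter.
- exact: bounded_measurable_discounted_partial.
- exact/bounded_measurableZ/bounded_measurable_iter.
by apply/funext => s /=; rewrite exprS; ring.
Qed.

Section discount_factor.
Variable q : R.
Hypotheses (q_ge0 : 0 <= q) (q_lt1 : q < 1).

Lemma discounted_itv f a b : bounded_measurable f ->
  (forall s, a <= f s <= b) ->
  forall s, a / (1 - q) <= discounted q f s <= b / (1 - q).
Proof.
by move=> bf f_ab s; apply: discounted_series_bounds => // t; exact: iter_itv.
Qed.

Lemma bounded_measurable_discounted f :
  bounded_measurable f -> bounded_measurable (discounted q f).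
Proof.
move=> bf; have [M f_M] := bounded_measurable_itvP bf.
apply: (bounded_measurable_itv (a := - M / (1 - q)) (b := M / (1 - q))); last first.
  exact: discounted_itv.
apply: (measurable_fun_cvg (h := discounted_partial q f)) => [N|s _].
  by case: (bounded_measurable_discounted_partial q N bf).
have iter_bound t : `|iter t T f s| <= M by rewrite ler_norml; exact: iter_itv.
exact: (is_cvg_discounted_series q_ge0 q_lt1 iter_bound).
Qed.

Lemma discounted_uniform_cvg f : bounded_measurable f ->
  exists K, forall N s,
    `|discounted q f s - discounted_partial q f N s| <= q ^+ N * K.
Proof.
move=> bf; have [M f_M] := bounded_measurable_itvP bf.
exists (M / (1 - q)) => N s; rewrite mulrA.
by apply: discounted_series_tail => // t; rewrite ler_norml; exact: iter_itv.
Qed.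

Lemma discounted_fixpoint f : bounded_measurable f ->
  discounted q f = f \+ q \*o T (discounted q f).
Proof.
move=> bf; have [K dp_K] := discounted_uniform_cvg bf.
have bD := bounded_measurable_discounted bf.
apply/funext => s; apply/eqP; rewrite -subr_eq0; apply/eqP.
apply: (eq0_le_geometric q_ge0 q_lt1 (K := 2 * q * K)) => N.
have T_dp_K :
    `|T (discounted_partial q f N) s - T (discounted q f) s| <= q ^+ N * K.
  apply: markov_lipschitz => //; first exact: bounded_measurable_discounted_partial.
  by move=> s'; rewrite distrC.
rewrite /= (_ : _ - _ = discounted q f s - discounted_partial q f N.+1 s
    + q * (T (discounted_partial q f N) s - T (discounted q f) s)); last first.
  by rewrite discounted_partialS //=; ring.
rewrite (le_trans (ler_normD _ _)) // normrM ger0_norm //.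
have := dp_K N.+1 s; rewrite exprS => dpS_K.
have := ler_wpM2l q_ge0 T_dp_K; lra.
Qed.

Lemma contraction_fixpoint_eq0 g : bounded_measurable g ->
  g = q \*o T g -> g = cst 0.
Proof.
move=> bg g_fix; have [M g_M] := bounded_measurable_itvP bg.
have g_le n s : `|g s| <= q ^+ n * M.
  elim: n s => [|n IH] s; first by rewrite expr0 mul1r ler_norml.
  rewrite g_fix /= normrM ger0_norm // exprS -mulrA ler_wpM2l //.
  by rewrite ler_norml; apply: T_itv => // s'; rewrite -ler_norml.
by apply/funext => s; exact: (eq0_le_geometric q_ge0 q_lt1 (g_le ^~ s)).
Qed.

Lemma discounted_unique f W : bounded_measurable f -> bounded_measurable W ->
  W = f \+ q \*o T W -> W = discounted q f.
Proof.
move=> bf bW W_fix; have bD := bounded_measurable_discounted bf.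
have diff0 : W \- discounted q f = cst 0.
  apply: contraction_fixpoint_eq0; first exact: bounded_measurableB.
  rewrite markovB // {1}W_fix {1}(discounted_fixpoint bf).
  by apply/funext => s /=; ring.
by apply/funext => s; apply/subr0_eq; exact: (congr1 (@^~ s) diff0).
Qed.

End discount_factor.

End markov_operator.

Section policy_operator.
Context (dS dA : measure_display) (S : measurableType dS) (A : measurableType dA)
  (R : realType) (P : R.-pker (S * A) ~> S) (pi : R.-pker S ~> A).
Implicit Types (f : S -> R) (rr : S * A -> R).

Lemma pol_stepE f :
  pol_step pi P f = kernel_integral pi (kernel_integral P (fun z => f z.2)).
Proof. by []. Qed.

Let bounded_measurable_snd f :
  bounded_measurable f -> bounded_measurable (fun z : (S * A) * S => f z.2).
Proof. by move=> [mf [M f_M]]; split; [exact: measurableT_comp | exists M]. Qed.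

Let bounded_measurable_next f :
  bounded_measurable f -> bounded_measurable (kernel_integral P (fun z => f z.2)).
Proof.
by move=> bf; apply/bounded_measurable_kernel_integral/bounded_measurable_snd.
Qed.

Lemma pol_step_markov : markov_operator (pol_step pi P).
Proof.
split=> [f bf|f g bf bg|c f bf|f a b bf f_ab]; rewrite ?pol_stepE.
- exact/bounded_measurable_kernel_integral/bounded_measurable_next.
- have := kernel_integralD P (bounded_measurable_snd bf) (bounded_measurable_snd bg).
  move=> /= ->; apply: kernel_integralD; exact: bounded_measurable_next.
- have := kernel_integralZ P c (bounded_measurable_snd bf).
  move=> /= ->; apply: kernel_integralZ; exact: bounded_measurable_next.
- apply: kernel_integral_itv; first exact: bounded_measurable_next.
  apply: kernel_integral_itv; first exact: bounded_measurable_snd.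
  by move=> z; exact: f_ab.
Qed.

Lemma bounded_measurable_pol_reward rr :
  bounded_measurable rr -> bounded_measurable (pol_reward pi rr).
Proof. exact: bounded_measurable_kernel_integral. Qed.

Lemma pol_reward_reshaped rr h lam g :
  bounded_measurable rr -> bounded_measurable h ->
  pol_reward pi (reshaped_reward P rr h lam g) =
  pol_reward pi rr \+ ((1 - lam) * g) \*o pol_step pi P h.
Proof.
move=> brr bh; rewrite pol_stepE -kernel_integralZ; last exact: bounded_measurable_next.
rewrite -kernel_integralD //; apply/bounded_measurableZ; exact: bounded_measurable_next.
Qed.

Lemma valueE rr g :
  value pi P rr g = discounted (pol_step pi P) g (pol_reward pi rr).
Proof. by []. Qed.

End policy_operator.

Section reshaping.
Context (dS dA : measure_display) (S : measurableType dS) (A : measurableType dA)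
  (R : realType) (P : R.-pker (S * A) ~> S) (pi : R.-pker S ~> A)
  (r : S * A -> R) (h : S -> R) (gamma lam : R).
Hypotheses (br : bounded_measurable r) (bh : bounded_measurable h).
Hypotheses (gamma_ge0 : 0 <= gamma) (gamma_lt1 : gamma < 1).
Hypotheses (q_ge0 : 0 <= lam * gamma) (q_lt1 : lam * gamma < 1).

Local Notation T := (pol_step pi P).
Local Notation V := (value pi P r gamma).

Let T_markov := pol_step_markov P pi.

Let br_pi : bounded_measurable (pol_reward pi r).
Proof. exact: bounded_measurable_pol_reward. Qed.

Lemma bounded_measurable_value : bounded_measurable V.
Proof. exact: (bounded_measurable_discounted T_markov gamma_ge0 gamma_lt1 br_pi). Qed.

Lemma bellman : V = pol_reward pi r \+ gamma \*o T V.
Proof. exact: (discounted_fixpoint T_markov gamma_ge0 gamma_lt1 br_pi). Qed.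

Lemma value_reshaped :
  value pi P (reshaped_reward P r h lam gamma) (lam * gamma) =
  V \+ ((1 - lam) * gamma) \*o discounted T (lam * gamma) (T (h \- V)).
Proof.
have bV := bounded_measurable_value.
have be : bounded_measurable (h \- V) by exact: bounded_measurableB.
have bTe := markov_bounded_measurable T_markov be.
have bD := bounded_measurable_discounted T_markov q_ge0 q_lt1 bTe.
rewrite valueE pol_reward_reshaped //; apply/esym/discounted_unique => //.
- apply: bounded_measurableD => //.
  exact/bounded_measurableZ/(markov_bounded_measurable T_markov).
- by apply: bounded_measurableD => //; exact: bounded_measurableZ.
rewrite (markovD T_markov) ?(markovZ T_markov) //; last exact: bounded_measurableZ.
apply/funext => s /=.
have V_fix := congr1 (@^~ s) bellman.
have D_fix := congr1 (@^~ s) (discounted_fixpoint T_markov q_ge0 q_lt1 bTe).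
have Te := congr1 (@^~ s) (markovB T_markov bh bV).
move: V_fix D_fix Te => /= -> -> ->; set D := discounted T _ _.
(* generalized so that ring does not compare the integrals up to conversion *)
move: (pol_reward pi r s) (T V s) (T h s) (T D s) => rs TVs Ths TDs; ring.
Qed.

End reshaping.

Theorem mainTheorem11 (dS dA : measure_display) (S : measurableType dS)
  (A : measurableType dA) (R : realType)
  (P : R.-pker (S * A) ~> S) (r : S * A -> R) (gamma : R)
  (r_meas : measurable_fun setT r)
  (r_range : forall sa, 0 <= r sa <= 1)
  (gamma_range : 0 <= gamma < 1)
  (pi : R.-pker S ~> A) (h : S -> R)
  (h_meas : measurable_fun setT h)
  (h_bdd : exists M : R, forall s, `|h s| <= M)
  (lam : R) (lam_range : 0 <= lam <= 1)
  (eps_l eps_u : R) (eps_l_ge0 : 0 <= eps_l) (eps_u_ge0 : 0 <= eps_u)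
  (hV : forall s, - eps_l <= h s - value pi P r gamma s <= eps_u) :
  forall s : S,
    - eps_l - (1 - lam) * gamma * eps_u / (1 - lam * gamma)
      <= h s - value pi P (reshaped_reward P r h lam gamma) (lam * gamma) s
      <= eps_u + (1 - lam) * gamma * eps_l / (1 - lam * gamma).
Proof.
move=> s; have br := bounded_measurable_itv r_meas r_range.
have bh : bounded_measurable h by split.
have /andP[g_ge0 g_lt1] := gamma_range; have /andP[l_ge0 l_le1] := lam_range.
have q_ge0 : 0 <= lam * gamma by exact: mulr_ge0.
have q_lt1 : lam * gamma < 1 by exact: le_lt_trans (ler_piMl g_ge0 l_le1) g_lt1.
have c_ge0 : 0 <= (1 - lam) * gamma by rewrite mulr_ge0 // subr_ge0.
have T_markov := pol_step_markov P pi.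
have be : bounded_measurable (h \- value pi P r gamma).
  by apply: bounded_measurableB => //; exact: bounded_measurable_value.
have Te_itv := markov_itv T_markov be hV.
have /andP[D_lo D_hi] := discounted_itv T_markov q_ge0 q_lt1
  (markov_bounded_measurable T_markov be) Te_itv s.
rewrite value_reshaped //=.
have := ler_wpM2l c_ge0 D_lo; have := ler_wpM2l c_ge0 D_hi; have := hV s.
rewrite !mulrA; lra.
Qed.
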